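(* Assume $\lambda_1<0$ and let $e\in\mathbb{S}^{n-1}$. The infimum $c^\star_e\in[0,+\infty)$ of the set $\{c^\mu_e:\ \mu>0\}$ is a minimum, attained at a unique $\mu^\star>0$; consequently $c^\star_e>0$. Moreover, for every $c>c^\star_e$ there exist $0<\mu_1<\mu_2$ such that $c^{\mu_1}_e=c^{\mu_2}_e=c$, whereas for every $c\in(0,c^\star_e)$ there is no $\mu>0$ with $c^\mu_e=c$.
   Context: Setting. Let $N,n\geq 1$ be integers, $[N]=\{1,\dots,N\}$, and fix $T,L_1,\dots,L_n>0$. ''Periodic'' means $T$-periodic in $t$ and $L_\alpha$-periodic in $x_\alpha$ for each $\alpha\in[n]$. For each $i\in[N]$ let $A_i:\mathbb{R}\times\mathbb{R}^n\to\mathbb{R}^{n\times n}$ (symmetric) and $q_i:\mathbb{R}\times\mathbb{R}^n\to\mathbb{R}^n$, and let $\mathbf{L}=(l_{i,j}):\mathbb{R}\times\mathbb{R}^n\to\mathbb{R}^{N\times N}$, all periodic, with some $\delta\in(0,1)$ such that $\mathbf{L},q_i$ are $\delta/2$-Hölder in $t$ and $\delta$-Hölder in $x$, and $A_i$ is $\delta/2$-Hölder in $t$ and $C^{1+\delta}$ in $x$. Standing assumptions: (i) $\min_{i}\inf_{|y|=1}\inf_{(t,x)}y\cdot A_i(t,x)y>0$; (ii) for $i\neq j$, $\min_{(t,x)}l_{i,j}\geq 0$; (iii) the matrix $(\max_{(t,x)}l_{i,j}(t,x))_{i,j}$ is irreducible (leaves invariant no coordinate subspace $\mathrm{span}(\mathbf{e}_{i_1},\dots,\mathbf{e}_{i_k})$,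 $1\leq k\leq N-1$; $1\times1$ matrices are irreducible). $\mathcal{P}_iu=\partial_tu-\nabla\cdot(A_i\nabla u)+q_i\cdot\nabla u$, $\mathcal{Q}\mathbf{u}=(\mathcal{P}_iu_i)_i-\mathbf{L}\mathbf{u}$. For $z\in\mathbb{R}^n$, $\lambda_{1,z}$ is the unique real number for which there is a periodic $C^{1,2}$ function $\mathbf{u}_z$ with positive components and $\mathcal{Q}(e^{z\cdot x}\mathbf{u}_z)=\lambda_{1,z}e^{z\cdot x}\mathbf{u}_z$; $z\mapsto\lambda_{1,z}$ is strictly concave, attains a maximum, and $|\lambda_{1,-\mu e}|$ grows quadratically as $\mu\to+\infty$. $\lambda_1=\max_z\lambda_{1,z}$. For $\mu>0$, $c^\mu_e=\lambda_{1,-\mu e}/(-\mu)$. *)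

From HB Require Import structures.
From mathcomp Require Import all_boot all_order all_algebra.
From mathcomp Require Import all_classical all_reals all_analysis.
Set Implicit Arguments. Unset Strict Implicit. Unset Printing Implicit Defensive.
Import Order.TTheory GRing.Theory Num.Theory.
Import numFieldNormedType.Exports.
Local Open Scope classical_set_scope.
Local Open Scope ring_scope.

Section Defs.
Variables (R : realType) (n N : nat).

Definition ebasis (a : 'I_n) : 'rV[R]_n := delta_mx 0 a.
Definition dotv (z y : 'rV[R]_n) : R := \sum_(a < n) z 0 a * y 0 a.
Definition enorm (y : 'rV[R]_n) : R := Num.sqrt (dotv y y).

Definition periodic (V : Type) (T : R) (Lp : 'I_n -> R)
  (f : R -> 'rV[R]_n -> V) : Prop :=
  forall t x, f (t + T) x = f t x /\
              forall a, f t (x + Lp a *: ebasis a) = f t x.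

Definition holder_tx (d : R) (g : R -> 'rV[R]_n -> R) : Prop :=
  exists C : R, forall t s x y,
    `|g t x - g s y| <= C * (`|t - s| `^ (d / 2) + enorm (x - y) `^ d).

Definition holder_x (d : R) (g : R -> 'rV[R]_n -> R) : Prop :=
  exists C : R, forall t x y, `|g t x - g t y| <= C * enorm (x - y) `^ d.

Definition dt (g : R -> 'rV[R]_n -> R) (t : R) (x : 'rV[R]_n) : R :=
  'D_1 (fun s => g s x) t.
Definition dx (a : 'I_n) (g : R -> 'rV[R]_n -> R) (t : R) (x : 'rV[R]_n) : R :=
  'D_(ebasis a) (fun y => g t y) x.

Definition jcont (g : R -> 'rV[R]_n -> R) : Prop :=
  continuous (fun p : R * 'rV[R]_n => g p.1 p.2).

Definition C12 (u : R -> 'rV[R]_n -> R) : Prop :=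
  (forall t x, derivable (fun s => u s x) t 1) /\
  (forall t x a, derivable (fun y => u t y) x (ebasis a)) /\
  (forall t x a b, derivable (fun y => dx b u t y) x (ebasis a)) /\
  jcont u /\ jcont (dt u) /\ (forall a, jcont (dx a u)) /\
  (forall a b, jcont (dx a (dx b u))).

Definition Pop (A : R -> 'rV[R]_n -> 'M[R]_n) (q : R -> 'rV[R]_n -> 'rV[R]_n)
  (w : R -> 'rV[R]_n -> R) (t : R) (x : 'rV[R]_n) : R :=
  dt w t x
  - \sum_(a < n) dx a (fun t' y => \sum_(b < n) A t' y a b * dx b w t' y) t x
  + \sum_(a < n) q t x 0 a * dx a w t x.

Definition Qop (A : 'I_N -> R -> 'rV[R]_n -> 'M[R]_n)
  (q : 'I_N -> R -> 'rV[R]_n -> 'rV[R]_n) (Lm : R -> 'rV[R]_n -> 'M[R]_N)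
  (u : 'I_N -> R -> 'rV[R]_n -> R) (i : 'I_N) (t : R) (x : 'rV[R]_n) : R :=
  Pop (A i) (q i) (u i) t x - \sum_(j < N) Lm t x i j * u j t x.

(* lam is a principal eigenvalue lambda_{1,z}: there is a periodic C^{1,2}
   u_z with positive components with Q(e^{z.x} u_z) = lam e^{z.x} u_z *)
Definition is_lambda1z (T : R) (Lp : 'I_n -> R)
  (A : 'I_N -> R -> 'rV[R]_n -> 'M[R]_n)
  (q : 'I_N -> R -> 'rV[R]_n -> 'rV[R]_n) (Lm : R -> 'rV[R]_n -> 'M[R]_N)
  (z : 'rV[R]_n) (lam : R) : Prop :=
  exists u : 'I_N -> R -> 'rV[R]_n -> R,
    (forall i, periodic T Lp (u i)) /\ (forall i, C12 (u i)) /\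
    (forall i t x, 0 < u i t x) /\
    forall i t x,
      Qop A q Lm (fun j t' y => expR (dotv z y) * u j t' y) i t x
      = lam * (expR (dotv z x) * u i t x).

Definition lmax (Lm : R -> 'rV[R]_n -> 'M[R]_N) : 'M[R]_N :=
  \matrix_(i, j) sup (range (fun p : R * 'rV[R]_n => Lm p.1 p.2 i j)).

Definition irreducible_mx (M : 'M[R]_N) : Prop :=
  forall S : {set 'I_N}, (0 < #|S| < N)%N ->
    ~ (forall v : 'cV[R]_N, (forall i, i \notin S -> v i 0 = 0) ->
         forall i, i \notin S -> (M *m v) i 0 = 0).

Definition standing_assumptions (T : R) (Lp : 'I_n -> R) (d : R)
  (A : 'I_N -> R -> 'rV[R]_n -> 'M[R]_n)
  (q : 'I_N -> R -> 'rV[R]_n -> 'rV[R]_n) (Lm : R -> 'rV[R]_n -> 'M[R]_N) : Prop :=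
  [/\ (0 < n)%N, (0 < N)%N, 0 < T, (forall a, 0 < Lp a) & 0 < d < 1 ] /\
  (forall i, periodic T Lp (A i)) /\ (forall i, periodic T Lp (q i)) /\
  periodic T Lp Lm /\
  (forall i t x, (A i t x)^T = A i t x) /\
  (forall i j, holder_tx d (fun t x => Lm t x i j)) /\
  (forall i a, holder_tx d (fun t x => q i t x 0 a)) /\
  (forall i a b, holder_tx d (fun t x => A i t x a b)) /\
  (forall i a b c, forall t x, derivable (fun y => A i t y a b) x (ebasis c)) /\
  (forall i a b c, holder_x d (dx c (fun t x => A i t x a b))) /\
  (exists eps : R, 0 < eps /\ forall i t x (y : 'rV[R]_n), enorm y = 1 ->
       eps <= dotv y (y *m A i t x)) /\
  (forall i j t x, i != j -> 0 <= Lm t x i j) /\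
  irreducible_mx (lmax Lm).

End Defs.

From HB Require Import structures.
From mathcomp Require Import all_boot all_order all_algebra.
From mathcomp Require Import all_classical all_reals all_analysis.
From mathcomp.algebra_tactics Require Import ring lra.
Import Order.TTheory GRing.Theory Num.Theory.
Import numFieldNormedType.Exports.
Local Open Scope classical_set_scope.
Local Open Scope ring_scope.

(* Along the ray -mu e, g mu := - lambda_{1,-mu e} is strictly convex, bounded
   below by - lambda_1 > 0 and grows quadratically, and c^mu_e = g mu / mu is
   the slope of the chord from the origin to the graph of g.  Being convex, g is
   continuous, and the slope blows up both at 0+ and at +oo, so it attains a
   positive minimum c*.  Two distinct minimisers would put g strictly below the
   line c* mu at their midpoint.  For c > c*, the line c mu lies above g at the
   minimiser but below it near 0 and near +oo, so it crosses the graph on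
   each side of the minimiser. *)

Section ConvexReal.
Context {R : realType}.
Implicit Types (G : R -> R) (x y s t : R).

Definition convex_fun G := forall x y s, 0 < s < 1 ->
  G (s * x + (1 - s) * y) <= s * G x + (1 - s) * G y.

Definition strictly_convex_fun G := forall x y s, x != y -> 0 < s < 1 ->
  G (s * x + (1 - s) * y) < s * G x + (1 - s) * G y.

Lemma strictly_convex_funW {G} : strictly_convex_fun G -> convex_fun G.
Proof.
move=> cG x y s s01; have [->|xy] := eqVneq x y; last exact/ltW/cG.
by rewrite -mulrDl addrC subrK !mul1r -mulrDl addrC subrK mul1r.
Qed.

Lemma convex_chord {G} (cG : convex_fun G) x y t : x < t < y ->
  (y - x) * G t <= (y - t) * G x + (t - x) * G y.
Proof.
move=> /andP[xt ty].
have yx : 0 < y - x by lra.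
pose s := (y - t) / (y - x).
have s01 : 0 < s < 1.
  by rewrite /s divr_gt0 ?ltr_pdivrMr ?subr_gt0 //=; lra.
have sE : 1 - s = (t - x) / (y - x) by rewrite /s; field; lra.
have tE : s * x + (1 - s) * y = t by rewrite sE /s; field; lra.
have := cG x y s s01; rewrite tE -(ler_pM2l yx) sE /s.
suff -> : (y - x) * ((y - t) / (y - x) * G x + (t - x) / (y - x) * G y)
        = (y - t) * G x + (t - x) * G y by [].
by field; rewrite gt_eqF.
Qed.

Lemma convex_funN {G} : convex_fun G -> convex_fun (fun x => G (- x)).
Proof.
by move=> cG x y s s01 /=; rewrite opprD -!mulrN cG.
Qed.

Lemma convex_lipschitz_at_right {G} (cG : convex_fun G) x t : 0 < t < 1 ->
  `|G (x + t) - G x| <= t * (`|G (x + 1) - G x| + `|G (x - 1) - G x|).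
Proof.
move=> /andP[t0 t1].
have := convex_chord cG x (x + 1) (x + t) ltac:(apply/andP; split; lra).
have := convex_chord cG (x - 1) (x + t) x ltac:(apply/andP; split; lra).
have hA := ler_wpM2l (ltW t0) (ler_norm (G (x + 1) - G x)).
have hB := ler_wpM2l (ltW t0) (ler_norm (G (x - 1) - G x)).
have := mulr_ge0 (ltW t0) (normr_ge0 (G (x + 1) - G x)).
have := mulr_ge0 (ltW t0) (normr_ge0 (G (x - 1) - G x)).
rewrite ler_norml mulrDr; lra.
Qed.

Lemma convex_lipschitz_at {G} (cG : convex_fun G) x y : `|y| < 1 ->
  `|G (x + y) - G x| <= `|y| * (`|G (x + 1) - G x| + `|G (x - 1) - G x|).
Proof.
move=> y1; have [y0|y0|->] := ltgtP y 0; last by rewrite addr0 subrr normr0 mul0r.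
- rewrite ltr0_norm // in y1 *.
  have := convex_lipschitz_at_right (convex_funN cG) (- x) (- y).
  by rewrite !opprD !opprK (addrC `|G (x - 1) - _|); apply; lra.
- by rewrite gtr0_norm // in y1 *; apply: convex_lipschitz_at_right; rewrite ?y0.
Qed.

Lemma convex_continuous {G} : convex_fun G -> continuous G.
Proof.
move=> cG x; apply/cvgrPdist_le => eps eps0.
set K := `|G (x + 1) - G x| + `|G (x - 1) - G x|.
have K0 : 0 <= K by rewrite addr_ge0.
have r0 : 0 < Num.min 1 (eps / (K + 1)) by rewrite lt_min ltr01 divr_gt0 //; lra.
apply/nbhs_ballP; exists (Num.min 1 (eps / (K + 1))) => // t.
rewrite /ball /= lt_min distrC => /andP[t1 teps].
have := convex_lipschitz_at cG x _ t1; rewrite subrKC distrC => /le_trans; apply.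
rewrite ltr_pdivlMr in teps; last lra.
rewrite -/K; have := normr_ge0 (t - x); nra.
Qed.

End ConvexReal.

Lemma sign_change_root {R : realType} (h : R -> R) x y : continuous h -> x <= y ->
  h x * h y < 0 -> exists2 z, x < z < y & h z = 0.
Proof.
move=> hc xy hxy.
have [z zxy hz] : exists2 z, z \in `[x, y] & h z = 0.
  apply: IVT => //; first exact: continuous_subspaceT.
  by rewrite ge_min le_max; case: (ltgtP (h x) 0) => /=; nra.
have xz : x != z by apply: contraTneq hxy => ->; rewrite hz mul0r ltxx.
have zy : z != y by apply: contraTneq hxy => <-; rewrite hz mulr0 ltxx.
by exists z => //; move: zxy; rewrite in_itv /= !lt_neqAle xz zy.
Qed.

Lemma inf_attained {R : realType} (S : set R) x : S x -> lbound S x -> inf S = x.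
Proof.
move=> Sx Slb; apply/eqP; rewrite eq_le lb_le_inf ?andbT //; last by exists x.
exact: (ge_inf (ex_intro _ x Slb)).
Qed.

Section SlopeMinimum.
Context {R : realType} {g : R -> R} {m a b : R}.
Hypotheses (g_sconvex : strictly_convex_fun g) (m_gt0 : 0 < m)
  (g_ge : forall x, m <= g x) (a_gt0 : 0 < a)
  (g_quadratic : forall x, 0 < x -> a * x ^+ 2 - b <= g x).

Lemma line_lt_near0 cc x : 0 < cc -> x < m / cc -> cc * x < g x.
Proof. by move=> cc0; rewrite ltr_pdivlMr // mulrC => /lt_le_trans; apply. Qed.

Lemma line_lt_near_oo cc : exists M, forall x, M < x -> cc * x < g x.
Proof.
exists (Num.max 1 ((`|cc| + `|b|) / a)) => x; rewrite gt_max => /andP[x1].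
rewrite ltr_pdivrMr // => ccb.
have x0 : 0 < x by lra.
have := g_quadratic x x0; have := ler_wpM2r (ltW x0) (ltW ccb).
have := ler_norm cc; have := ler_norm b; have := normr_ge0 b; nra.
Qed.

Let g_cont : continuous g := convex_continuous (strictly_convex_funW g_sconvex).

Lemma exists_slope_min :
  exists2 mu, 0 < mu & forall x, 0 < x -> g mu / mu <= g x / x.
Proof.
have g1_gt0 : 0 < g 1 := lt_le_trans m_gt0 (g_ge 1).
have [M line_lt] := line_lt_near_oo (g 1).
(* Outside [lo, hi] the slope exceeds its value g 1 at 1. *)
pose lo := Num.min 1 (m / g 1); pose hi := Num.max 1 M.
have lo_gt0 : 0 < lo by rewrite lt_min ltr01 divr_gt0.
have lo_le1 : lo <= 1 by rewrite ge_min lexx.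
have hi_ge1 : 1 <= hi by rewrite le_max lexx.
have slope_cont : {within `[lo, hi], continuous (fun x => g x / x)}.
  apply: continuous_in_subspaceT => x; rewrite inE /= in_itv /= => /andP[lox _].
  have x_neq0 : x != 0 by rewrite gt_eqF //; lra.
  by apply: cvgM; [exact: g_cont | exact: cvgV].
have [mu muI mu_min] := EVT_min (le_trans lo_le1 hi_ge1) slope_cont.
move: muI; rewrite in_itv /= => /andP[lomu muhi].
have mu_le_g1 : g mu / mu <= g 1.
  by have := mu_min 1; rewrite divr1; apply; rewrite in_itv /= lo_le1.
exists mu => [|x x0]; first lra.
have [xlo|lox] := ltP x lo.
  apply: (le_trans mu_le_g1); rewrite ler_pdivlMr //.
  apply/ltW/(line_lt_near0 _ _ g1_gt0)/(lt_le_trans xlo).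
  by rewrite ge_min lexx orbT.
have [hix|xhi] := ltP hi x.
  apply: (le_trans mu_le_g1); rewrite ler_pdivlMr //.
  by apply/ltW/line_lt/le_lt_trans/hix; rewrite le_max lexx orbT.
by apply: mu_min; rewrite in_itv /= lox xhi.
Qed.

Lemma slope_min_unique x y : 0 < x -> 0 < y ->
  (forall z, 0 < z -> g x / x <= g z / z) -> g y / y = g x / x -> x = y.
Proof.
move=> x0 y0 x_min yx; have [//|xy] := eqVneq x y; exfalso.
set c := g x / x in x_min yx.
have gx : g x = c * x by rewrite divfK ?gt_eqF.
have gy : g y = c * y by rewrite -yx divfK ?gt_eqF.
have half01 : 0 < (1 / 2 : R) < 1 by apply/andP; split; lra.
have := g_sconvex x y (1 / 2) xy half01; rewrite gx gy.
set z := 1 / 2 * x + _; have z0 : 0 < z by rewrite /z; lra.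
have := x_min z z0; rewrite -/c ler_pdivlMr // /z; lra.
Qed.

Lemma slope_eq_twice mu cc : 0 < mu -> g mu / mu < cc ->
  exists mu1 mu2, [/\ 0 < mu1 < mu2, g mu1 / mu1 = cc & g mu2 / mu2 = cc].
Proof.
move=> mu0 slope_lt.
have cc0 : 0 < cc.
  by have := divr_ge0 (ltW (lt_le_trans m_gt0 (g_ge mu))) (ltW mu0); lra.
pose h x := g x - cc * x.
have h_cont : continuous h.
  by move=> x; apply: cvgB; [exact: g_cont | apply: cvgM; [exact: cvg_cst | exact: cvg_id]].
have h_mu : h mu < 0 by rewrite subr_lt0 -ltr_pdivrMr.
pose lo := Num.min (mu / 2) (m / cc / 2).
have lo_gt0 : 0 < lo by rewrite lt_min !divr_gt0.
have h_lo : 0 < h lo.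
  rewrite subr_gt0 line_lt_near0 // gt_min orbC.
  by rewrite ltr_pdivrMr ?ltr_pMr ?ltr1n ?divr_gt0.
have [M line_lt] := line_lt_near_oo cc.
pose hi := Num.max (mu + 1) (M + 1).
have h_hi : 0 < h hi.
  by rewrite subr_gt0 line_lt // lt_max orbC ltrDl ltr01.
have [mu1 /andP[lo_mu1 mu1_mu] h1] : exists2 mu1, lo < mu1 < mu & h mu1 = 0.
  by apply: sign_change_root => //; [rewrite ge_min ler_pdivrMr; lra | nra].
have [mu2 /andP[mu_mu2 _] h2] : exists2 mu2, mu < mu2 < hi & h mu2 = 0.
  by apply: sign_change_root => //; [rewrite le_max lerDl ler01 | nra].
have root_slope x : 0 < x -> h x = 0 -> g x / x = cc.
  by move=> x0 /eqP; rewrite subr_eq0 => /eqP ->; rewrite mulfK ?gt_eqF.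
exists mu1, mu2; split; first by apply/andP; split; lra.
  by rewrite root_slope //; lra.
by rewrite root_slope //; lra.
Qed.

End SlopeMinimum.

Lemma enorm0 {R : realType} {n : nat} : enorm (0 : 'rV[R]_n) = 0.
Proof. by rewrite /enorm /dotv big1 ?sqrtr0 // => a _; rewrite mxE mul0r. Qed.

Lemma strictly_convex_fun_line {R : realType} {n : nat} {f : 'rV[R]_n -> R} {e} :
  (forall z w (s : R), z != w -> 0 < s < 1 ->
     s * f z + (1 - s) * f w < f (s *: z + (1 - s) *: w)) ->
  e != 0 -> strictly_convex_fun (fun mu => - f (- mu *: e)).
Proof.
move=> f_sconcave e0 x y s xy s01.
have xe_ye : - x *: e != - y *: e.
  by rewrite -subr_eq0 -scalerBl scaler_eq0 negb_or (negbTE e0) subr_eq0 eqr_opp xy.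
have := f_sconcave _ _ _ xe_ye s01.
rewrite !scalerA -scalerDl !mulrN -opprD; lra.
Qed.

Theorem lemma3p5 (R : realType) (n N : nat) (T : R) (Lp : 'I_n -> R) (d : R)
  (A : 'I_N -> R -> 'rV[R]_n -> 'M[R]_n)
  (q : 'I_N -> R -> 'rV[R]_n -> 'rV[R]_n) (Lm : R -> 'rV[R]_n -> 'M[R]_N)
  (lam1 : 'rV[R]_n -> R) (z0 : 'rV[R]_n) (e : 'rV[R]_n) :
  standing_assumptions T Lp d A q Lm ->
  (* lam1 z is the unique principal eigenvalue lambda_{1,z} *)
  (forall z, is_lambda1z T Lp A q Lm z (lam1 z)) ->
  (forall z l, is_lambda1z T Lp A q Lm z l -> l = lam1 z) ->
  (* known facts: strict concavity, maximum attained at z0, quadratic growth *)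
  (forall z w (s : R), z != w -> 0 < s < 1 ->
     s * lam1 z + (1 - s) * lam1 w < lam1 (s *: z + (1 - s) *: w)) ->
  (forall z, lam1 z <= lam1 z0) ->
  (forall e' : 'rV[R]_n, enorm e' = 1 ->
     exists a b a' b' : R, 0 < a /\ 0 < a' /\ forall mu : R, 0 < mu ->
       a * mu ^+ 2 - b <= `|lam1 (- mu *: e')| <= a' * mu ^+ 2 + b') ->
  (* lambda_1 = max_z lambda_{1,z} < 0 *)
  lam1 z0 < 0 ->
  enorm e = 1 ->
  let c := fun mu : R => lam1 (- mu *: e) / (- mu) in
  let cstar := inf [set c mu | mu in [set mu : R | 0 < mu]] in
  [/\ 0 <= cstar,
      exists! mu, 0 < mu /\ c mu = cstar,
      0 < cstar,
      (forall cc, cstar < cc -> exists mu1 mu2, 0 < mu1 < mu2 /\ c mu1 = cc /\ c mu2 = cc)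
    & (forall cc, 0 < cc < cstar -> forall mu, 0 < mu -> c mu <> cc)].
Proof.
move=> _ _ _ lam1_sconcave lam1_max lam1_quadratic lam1_neg e1 c cstar.
pose g mu := - lam1 (- mu *: e).
have cE mu : c mu = g mu / mu by rewrite /c /g invrN mulrN mulNr.
have e_neq0 : e != 0 by apply: contra_eq_neq e1 => ->; rewrite enorm0 eq_sym oner_neq0.
have g_sconvex := strictly_convex_fun_line lam1_sconcave e_neq0.
have m_gt0 : 0 < - lam1 z0 by rewrite oppr_gt0.
have g_ge x : - lam1 z0 <= g x by rewrite lerN2.
have [a [b [a' [b' [a_gt0 [_ lam1_bound]]]]]] := lam1_quadratic e e1.
have g_quadratic x : 0 < x -> a * x ^+ 2 - b <= g x.
  move=> x_gt0; have /andP[+ _] := lam1_bound x x_gt0.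
  by rewrite ler0_norm // ltW // (le_lt_trans (lam1_max _) lam1_neg).
have [mus mus_gt0 mus_min] := exists_slope_min g_sconvex m_gt0 g_ge a_gt0 g_quadratic.
have c_min mu : 0 < mu -> c mus <= c mu by rewrite !cE; apply: mus_min.
have cstarE : cstar = c mus.
  by apply: inf_attained; [exists mus | move=> _ [mu mu_gt0 <-]; apply: c_min].
have cstar_gt0 : 0 < cstar by rewrite cstarE cE divr_gt0 // (lt_le_trans m_gt0).
split => //; first exact: ltW.
- exists mus; split => // mu [mu_gt0]; rewrite cstarE !cE.
  exact: slope_min_unique.
- move=> cc; rewrite cstarE cE.
  move=> /(slope_eq_twice g_sconvex m_gt0 g_ge a_gt0 g_quadratic _ _ mus_gt0).
  by move=> [mu1 [mu2 [? ? ?]]]; exists mu1, mu2; rewrite !cE.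
- move=> cc /andP[_ cc_lt] mu /c_min; rewrite -cstarE; lra.
Qed.
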